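(* There exist a continuous map $f : \mathbb{R}^2 \to \mathbb{R}^2$ and a fixed point $p$ of $f$ such that $p$ has a neighborhood containing no periodic point of $f$ other than $p$, $\{p\}$ is not an isolated invariant set, and $i(f^n,p) = 2^n - 1$ for every $n \ge 1$ (in particular the sequence $\{i(f^n,p)\}_{n\ge1}$ is unbounded).
   Context: $i(g,p)$ is the fixed point index. $\{p\}$ is an isolated invariant set if there is a compact $N$ with $\{p\} = \mathrm{Inv}(f,N) \subset \mathrm{int}(N)$, where $\mathrm{Inv}(f,N)$ is the set of $x \in N$ admitting a sequence $(x_n)_{n\in\mathbb{Z}}\subset N$ with $x_0=x$, $f(x_n)=x_{n+1}$. *)

From Stdlib Require Import Reals List ZArith.
Open Scope R_scope.

Definition R2 : Type := (R * R)%type.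

Definition add2 (x y : R2) : R2 := (fst x + fst y, snd x + snd y).
Definition sub2 (x y : R2) : R2 := (fst x - fst y, snd x - snd y).
Definition dist2 (x y : R2) : R :=
  sqrt ((fst x - fst y) ^ 2 + (snd x - snd y) ^ 2).

Definition continuous2 (f : R2 -> R2) : Prop :=
  forall x eps, 0 < eps -> exists delta, 0 < delta /\
    forall y, dist2 y x < delta -> dist2 (f y) (f x) < eps.

Definition iter2 (n : nat) (f : R2 -> R2) : R2 -> R2 := Nat.iter n f.

Definition open2 (U : R2 -> Prop) : Prop :=
  forall x, U x -> exists eps, 0 < eps /\ forall y, dist2 y x < eps -> U y.

Definition compact2 (K : R2 -> Prop) : Prop :=
  forall (I : Type) (U : I -> R2 -> Prop),
    (forall i, open2 (U i)) ->
    (forall x, K x -> exists i, U i x) ->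
    exists l : list I, forall x, K x -> exists i, In i l /\ U i x.

Definition interior2 (N : R2 -> Prop) (x : R2) : Prop :=
  exists eps, 0 < eps /\ forall y, dist2 y x < eps -> N y.

Definition Inv (f : R2 -> R2) (N : R2 -> Prop) (x : R2) : Prop :=
  N x /\ exists xs : Z -> R2,
    xs 0%Z = x /\ (forall n, N (xs n)) /\ (forall n, f (xs n) = xs (n + 1)%Z).

Definition isolated_invariant_singleton (f : R2 -> R2) (p : R2) : Prop :=
  exists N : R2 -> Prop, compact2 N /\
    (forall x, Inv f N x <-> x = p) /\ interior2 N p.

Definition periodic_point (f : R2 -> R2) (x : R2) : Prop :=
  exists n : nat, (1 <= n)%nat /\ iter2 n f x = x.

(* oriented angle from vector a to vector b, in (-PI, PI] (atan2 of cross, dot) *)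
Definition angle2 (a b : R2) : R :=
  let c := fst a * snd b - snd a * fst b in
  let d := fst a * fst b + snd a * snd b in
  if Rlt_dec 0 d then atan (c / d)
  else if Rlt_dec d 0 then
    (if Rle_dec 0 c then atan (c / d) + PI else atan (c / d) - PI)
  else if Rlt_dec 0 c then PI / 2
  else if Rlt_dec c 0 then - (PI / 2) else 0.

Fixpoint rsum (F : nat -> R) (n : nat) : R :=
  match n with O => 0 | S m => rsum F m + F m end.

(* winding number around 0 of a loop gamma : [0,1] -> R^2 \ {0}:
   for all sufficiently fine uniform partitions, the sum of the angle
   increments equals 2 PI k *)
Definition winding_number (gamma : R -> R2) (k : Z) : Prop :=
  exists N0 : nat, forall N : nat, (N0 <= N)%nat ->
    rsum (fun j => angle2 (gamma (INR j / INR N)) (gamma (INR (S j) / INR N))) N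
    = 2 * PI * IZR k.

(* fixed point index i(g,p) = deg(id - g) at an isolated fixed point p,
   computed as the winding number of x - g x on small circles around p *)
Definition fixed_point_index (g : R2 -> R2) (p : R2) (k : Z) : Prop :=
  g p = p /\
  exists r0, 0 < r0 /\
    (forall x, dist2 x p <= r0 -> g x = x -> x = p) /\
    forall r, 0 < r -> r < r0 ->
      winding_number
        (fun t => let x := add2 p (r * cos (2 * PI * t), r * sin (2 * PI * t)) in
                  sub2 x (g x)) k.

From Stdlib Require Import Reals ZArith Lra Lia.
Open Scope R_scope.

(* In polar coordinates the map is [r e^{it} ↦ r H(t) e^{iΦ(t)}] (H is [radial],
   Φ is [Phi]), where Φ lifts a degree-2 circle map.  An arc around the angle 0 is forward invariant
   and the only periodic angles in it are the fixed angles 0 (where H = 1/2)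
   and ±2 E0 (where H = 2), while orbits avoiding the arc only see H = 2.  So
   at a periodic angle the radial factor of [f^n] is 2^{-n} or 2^n, never 1,
   and the origin is the only periodic point.  The ray of angle 0 contracts to
   the origin, and so does a backward orbit ending on the ray of angle π,
   which gives full orbits in every neighbourhood of the origin.
   Finally [x - f^n x = r e^{it} (1 - H_n e^{i(Φ^n(t) - t)})]: besides the
   turn of [e^{it}], the second factor winds once around 0 at each of the
   2^n - 2 nonzero fixed angles of [Φ^n], where [H_n = 2^n > 1], and not at
   the angle 0, where [H_n < 1]; hence the index 2^n - 1. *)

Lemma PI_gt_2 : 2 < PI.
Proof. pose proof PI2_1; lra. Qed.

Lemma period_2PI_Z (P : R -> R) :
  (forall x k, P (x + 2 * INR k * PI) = P x) ->
  forall x k, P (x + 2 * PI * IZR k) = P x.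
Proof.
  intros HP x k. destruct (Z_le_gt_dec 0 k) as [Hk|Hk].
  - rewrite <- (Z2Nat.id k Hk), <- INR_IZR_INZ.
    replace (x + 2 * PI * INR (Z.to_nat k)) with (x + 2 * INR (Z.to_nat k) * PI) by ring.
    apply HP.
  - rewrite <- (HP (x + 2 * PI * IZR k) (Z.to_nat (- k))).
    rewrite INR_IZR_INZ, Z2Nat.id, opp_IZR by lia. f_equal; ring.
Qed.

Lemma sin_period_Z x k : sin (x + 2 * PI * IZR k) = sin x.
Proof. exact (period_2PI_Z sin sin_period x k). Qed.

Lemma cos_period_Z x k : cos (x + 2 * PI * IZR k) = cos x.
Proof. exact (period_2PI_Z cos cos_period x k). Qed.

Lemma angle_reduce (x : R) :
  exists (k : Z) (v : R), x = v + 2 * PI * IZR k /\ - PI <= v < PI.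
Proof.
  pose proof PI_RGT_0. set (k := up ((x - PI) / (2 * PI))).
  destruct (archimed ((x - PI) / (2 * PI))) as [H1 H2]. fold k in H1, H2.
  exists k, (x - 2 * PI * IZR k). split; [ring|].
  apply Rmult_lt_compat_l with (r := 2 * PI) in H1; [|lra].
  apply Rmult_le_compat_l with (r := 2 * PI) in H2; [|lra].
  replace (2 * PI * ((x - PI) / (2 * PI))) with (x - PI) in H1 by (field; lra).
  replace (2 * PI * (IZR k - (x - PI) / (2 * PI))) with (2 * PI * IZR k - (x - PI))
    in H2 by (field; lra).
  lra.
Qed.

Lemma cos_eq_1_period (p : R) : cos p = 1 -> exists k : Z, p = 2 * PI * IZR k.
Proof.
  intros Hp. destruct (angle_reduce p) as [k [v [-> Hv]]]. exists k.
  rewrite cos_period_Z in Hp. pose proof PI_RGT_0.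
  enough (v = 0) by lra.
  destruct (Rtotal_order v 0) as [Hl|[He|Hg]]; auto.
  - assert (Hlt : cos (- v) < cos 0) by (apply cos_decreasing_1; lra).
    rewrite cos_neg, cos_0 in Hlt. lra.
  - assert (Hlt : cos v < cos 0) by (apply cos_decreasing_1; lra).
    rewrite cos_0 in Hlt. lra.
Qed.

Lemma cos_sin_eq_period (a b : R) :
  cos a = cos b -> sin a = sin b -> exists k : Z, a = b + 2 * PI * IZR k.
Proof.
  intros Hc Hs. destruct (cos_eq_1_period (a - b)) as [k Hk]; [|exists k; lra].
  rewrite cos_minus, Hc, Hs. pose proof (sin2_cos2 b) as Hb. unfold Rsqr in Hb. lra.
Qed.

Lemma IZR_2PI_small (z : Z) : Rabs (2 * PI * IZR z) < 2 * PI -> z = 0%Z.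
Proof.
  intros H. pose proof PI_RGT_0.
  rewrite Rabs_mult, (Rabs_right (2 * PI)), <- abs_IZR in H by lra.
  assert (Habs : IZR (Z.abs z) < 1) by (apply Rmult_lt_reg_l with (2 * PI); lra).
  apply lt_IZR in Habs. lia.
Qed.

(* Pointwise forms of the Ranalysis combinators, stated on lambda terms so that
   they can be applied by syntax-directed matching. *)

Lemma cpt_plus f g x :
  continuity_pt f x -> continuity_pt g x -> continuity_pt (fun y => f y + g y) x.
Proof. exact (continuity_pt_plus f g x). Qed.
Lemma cpt_minus f g x :
  continuity_pt f x -> continuity_pt g x -> continuity_pt (fun y => f y - g y) x.
Proof. exact (continuity_pt_minus f g x). Qed.
Lemma cpt_mult f g x :
  continuity_pt f x -> continuity_pt g x -> continuity_pt (fun y => f y * g y) x.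
Proof. exact (continuity_pt_mult f g x). Qed.
Lemma cpt_div f g x : continuity_pt f x -> continuity_pt g x -> g x <> 0 ->
  continuity_pt (fun y => f y / g y) x.
Proof. exact (continuity_pt_div f g x). Qed.
Lemma cpt_opp f x : continuity_pt f x -> continuity_pt (fun y => - f y) x.
Proof. exact (continuity_pt_opp f x). Qed.
Lemma cpt_const c x : continuity_pt (fun _ => c) x.
Proof. apply continuity_pt_const. intros ? ?; reflexivity. Qed.
Lemma cpt_id x : continuity_pt (fun y => y) x.
Proof. apply (derivable_continuous_pt id), derivable_pt_id. Qed.
Lemma cpt_comp f g x :
  continuity_pt f x -> continuity_pt g (f x) -> continuity_pt (fun y => g (f y)) x.
Proof. exact (continuity_pt_comp f g x). Qed.
Lemma cpt_abs f x : continuity_pt f x -> continuity_pt (fun y => Rabs (f y)) x.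
Proof. intros. apply (cpt_comp f Rabs); auto. apply Rcontinuity_abs. Qed.
Lemma cpt_sin f x : continuity_pt f x -> continuity_pt (fun y => sin (f y)) x.
Proof. intros. apply (cpt_comp f sin); auto. apply continuity_sin. Qed.
Lemma cpt_cos f x : continuity_pt f x -> continuity_pt (fun y => cos (f y)) x.
Proof. intros. apply (cpt_comp f cos); auto. apply continuity_cos. Qed.
Lemma cpt_atan f x : continuity_pt f x -> continuity_pt (fun y => atan (f y)) x.
Proof.
  intros. apply (cpt_comp f atan); auto.
  apply derivable_continuous_pt, derivable_pt_atan.
Qed.

Ltac cont := repeat (match goal with
  | |- continuity_pt (fun _ => ?c) _ => apply cpt_const
  | |- continuity_pt (fun y => y) _ => apply cpt_id
  | |- continuity_pt (Rmult ?c) _ => apply (cpt_mult (fun _ => c) (fun y => y))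
  | |- continuity_pt (fun y => _ + _) _ => apply cpt_plus
  | |- continuity_pt (fun y => _ - _) _ => apply cpt_minus
  | |- continuity_pt (fun y => _ * _) _ => apply cpt_mult
  | |- continuity_pt (fun y => - _) _ => apply cpt_opp
  | |- continuity_pt (fun y => Rabs _) _ => apply cpt_abs
  | |- continuity_pt (fun y => sin _) _ => apply cpt_sin
  | |- continuity_pt (fun y => cos _) _ => apply cpt_cos
  | |- continuity_pt (fun y => atan _) _ => apply cpt_atan
  end).

Lemma continuity_pt_eps f a : continuity_pt f a -> forall eps, 0 < eps ->
  exists alp, 0 < alp /\ forall z, Rabs (z - a) < alp -> Rabs (f z - f a) < eps.
Proof.
  intros Hf eps He. destruct (Hf eps He) as [alp [Ha Hz]].
  exists alp. split; auto. intros z Hza. destruct (Req_dec z a) as [->|Hne].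
  - unfold Rminus. rewrite Rplus_opp_r, Rabs_R0. auto.
  - apply (Hz z). split; [split; [exact I| auto]| exact Hza].
Qed.

Definition near (t0 : R) (P : R -> Prop) : Prop :=
  exists d, 0 < d /\ forall t, Rabs (t - t0) < d -> P t.

Lemma near_conj t0 (P Q : R -> Prop) :
  near t0 P -> near t0 Q -> near t0 (fun t => P t /\ Q t).
Proof.
  intros [d1 [Hd1 H1]] [d2 [Hd2 H2]]. exists (Rmin d1 d2). split; [now apply Rmin_glb_lt|].
  intros t Ht. pose proof (Rmin_l d1 d2). pose proof (Rmin_r d1 d2).
  split; [apply H1| apply H2]; lra.
Qed.

Lemma near_mono t0 (P Q : R -> Prop) : (forall t, P t -> Q t) -> near t0 P -> near t0 Q.
Proof. intros HPQ [d [Hd HP]]. exists d. auto. Qed.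

Lemma continuity_pt_near_gt f t0 a : continuity_pt f t0 -> a < f t0 -> near t0 (fun t => a < f t).
Proof.
  intros Hf Ha. destruct (continuity_pt_eps f t0 Hf (f t0 - a)) as [d [Hd Hz]]; [lra|].
  exists d. split; auto. intros t Ht. specialize (Hz t Ht). apply Rabs_def2 in Hz. lra.
Qed.

Lemma continuity_pt_near_lt f t0 a : continuity_pt f t0 -> f t0 < a -> near t0 (fun t => f t < a).
Proof.
  intros Hf Ha. apply (near_mono t0 (fun t => - a < - f t)); [intros; lra|].
  apply (continuity_pt_near_gt (fun t => - f t)); [now apply cpt_opp| lra].
Qed.

Lemma continuity_pt_near_ext f g t0 :
  near t0 (fun t => f t = g t) -> continuity_pt g t0 -> continuity_pt f t0.
Proof.
  intros [d [Hd Hfg]]. apply (continuity_pt_locally_ext g f d t0 Hd).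
  intros y Hy. symmetry. now apply Hfg.
Qed.

(** * Winding numbers from continuous lifts *)

Lemma angle2_polar r1 r2 a b : 0 < r1 -> 0 < r2 -> Rabs (b - a) < PI / 2 ->
  angle2 (r1 * cos a, r1 * sin a) (r2 * cos b, r2 * sin b) = b - a.
Proof.
  intros H1 H2 Hab. apply Rabs_def2 in Hab. unfold angle2; simpl.
  replace (r1 * cos a * (r2 * sin b) - r1 * sin a * (r2 * cos b))
    with (r1 * r2 * sin (b - a)) by (rewrite sin_minus; ring).
  replace (r1 * cos a * (r2 * cos b) + r1 * sin a * (r2 * sin b))
    with (r1 * r2 * cos (b - a)) by (rewrite cos_minus; ring).
  assert (Hcos : 0 < cos (b - a)) by (apply cos_gt_0; lra).
  assert (Hd : 0 < r1 * r2 * cos (b - a)) by (repeat apply Rmult_lt_0_compat; lra).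
  destruct (Rlt_dec 0 (r1 * r2 * cos (b - a))); [|lra].
  replace (r1 * r2 * sin (b - a) / (r1 * r2 * cos (b - a))) with (tan (b - a))
    by (unfold tan; field; split; lra).
  apply atan_tan. lra.
Qed.

Lemma rsum_ext F G n : (forall j, (j < n)%nat -> F j = G j) -> rsum F n = rsum G n.
Proof.
  induction n as [|n IH]; intros H; simpl; auto.
  rewrite IH by (intros; apply H; lia). rewrite H by lia. reflexivity.
Qed.

Lemma rsum_telescope (L : nat -> R) n : rsum (fun j => L (S j) - L j) n = L n - L 0%nat.
Proof. induction n as [|n IH]; simpl; [ring| rewrite IH; ring]. Qed.

Lemma partition_point_bounds (j N : nat) :
  (0 < N)%nat -> (j <= N)%nat -> 0 <= INR j / INR N <= 1.
Proof.
  intros HN Hj. assert (0 < INR N) by (apply lt_0_INR; lia).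
  assert (INR j <= INR N) by (apply le_INR; lia).
  split; [apply Rmult_le_pos; [apply pos_INR| left; apply Rinv_0_lt_compat; lra]|].
  apply Rmult_le_reg_r with (INR N); [lra|]. field_simplify; lra.
Qed.

Lemma eventually_inv_INR_lt (del : R) : 0 < del ->
  exists N0 : nat, forall N, (N0 <= N)%nat -> (0 < N)%nat /\ / INR N < del.
Proof.
  intros Hdel. destruct (archimed (/ del)) as [Ha _].
  assert (Hpos : (0 < up (/ del))%Z).
  { apply lt_IZR. pose proof (Rinv_0_lt_compat del Hdel). simpl. lra. }
  exists (Z.to_nat (up (/ del))). intros N HN. split; [lia|].
  assert (IZR (up (/ del)) <= INR N) by (rewrite INR_IZR_INZ; apply IZR_le; lia).
  assert (0 < / del) by (apply Rinv_0_lt_compat; lra).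
  rewrite <- (Rinv_inv del). apply Rinv_lt_contravar.
  - apply Rmult_lt_0_compat; lra.
  - lra.
Qed.

(* Uniform continuity of the lift makes every angle increment of a fine
   partition equal to the increment of the lift, so the sum telescopes. *)
Lemma winding_number_of_lift (gamma : R -> R2) (Lam rho : R -> R) (k : Z) :
  (forall t, 0 <= t <= 1 -> continuity_pt Lam t) ->
  (forall t, 0 <= t <= 1 ->
     0 < rho t /\ gamma t = (rho t * cos (Lam t), rho t * sin (Lam t))) ->
  Lam 1 - Lam 0 = 2 * PI * IZR k ->
  winding_number gamma k.
Proof.
  intros Hcont Hrep Hdiff. pose proof PI_RGT_0.
  assert (Hu : uniform_continuity Lam (fun t => 0 <= t <= 1))
    by (apply Heine; [apply compact_P3| exact Hcont]).
  destruct (Hu (mkposreal (PI / 2) ltac:(lra))) as [[del Hdel] Hd]. simpl in Hd.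
  destruct (eventually_inv_INR_lt del Hdel) as [N0 HN0].
  exists N0. intros N HN. destruct (HN0 N HN) as [HNpos Hmesh].
  assert (HNR : 0 < INR N) by (apply lt_0_INR; lia).
  rewrite (rsum_ext _ (fun j => Lam (INR (S j) / INR N) - Lam (INR j / INR N))).
  - rewrite (rsum_telescope (fun j => Lam (INR j / INR N))); simpl.
    replace (INR N / INR N) with 1 by (field; lra).
    replace (0 / INR N) with 0 by (field; lra). exact Hdiff.
  - intros j Hj.
    assert (Hj1 := partition_point_bounds j N HNpos ltac:(lia)).
    assert (Hj2 := partition_point_bounds (S j) N HNpos ltac:(lia)).
    destruct (Hrep _ Hj1) as [Hr1 ->], (Hrep _ Hj2) as [Hr2 ->].
    apply angle2_polar; auto. apply Hd; auto.
    rewrite S_INR. replace ((INR j + 1) / INR N - INR j / INR N) with (/ INR N) by (field; lra).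
    rewrite Rabs_right; [lra| left; apply Rinv_0_lt_compat; lra].
Qed.

(** * The circle map *)

(* The angular map [Phi] is a lift of a degree-2 circle map which doubles angles
   in [-E0, E0] and is constant (= ±2 E0) for E0 <= |t| <= W0; the radial
   factor [radial] is 1/2 at the angle 0 and 2 outside the arc |t| < 2 E0. *)
Definition E0 : R := 1/10.
Definition W0 : R := 1/4.
Definition s1 : R := sin (1/2).
Definition c0 : R := cos (1/5).

Definition plateau (v : R) : R :=
  - (Rabs (v + W0) - Rabs (v - W0)) + (Rabs (v + E0) - Rabs (v - E0)).
Definition clamp (s : R) : R := (Rabs (s + s1) - Rabs (s - s1)) / 2.
(* [asin (clamp (sin t))] is a continuous periodic function equal to [t] on
   [-W0, W0]; the clamp keeps [asin] away from the points ±1. *)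
Definition Phi (t : R) : R := 2 * t + plateau (asin (clamp (sin t))).
Definition radial_profile (c : R) : R :=
  2 - 3/2 * (((c - c0) / (1 - c0)) + Rabs ((c - c0) / (1 - c0))) / 2.
Definition radial (t : R) : R := radial_profile (cos t).

Ltac destruct_Rabs := unfold Rabs in *; repeat match goal with
  | |- context [Rcase_abs ?x] => destruct (Rcase_abs x)
  | H : context [Rcase_abs ?x] |- _ => destruct (Rcase_abs x) end; try lra.

Lemma Rabs_le_inv x a : Rabs x <= a -> - a <= x <= a.
Proof. intros. destruct_Rabs. Qed.

Lemma sin_W0_pos : 0 < sin W0.
Proof. unfold W0. pose proof PI_gt_2. apply sin_gt_0; lra. Qed.

Lemma s1_bounds : sin W0 < s1 < 1.
Proof.
  pose proof PI2_1. unfold s1, W0. split.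
  - apply sin_increasing_1; lra.
  - assert (Hx : sin (1/2) < sin (PI/2)) by (apply sin_increasing_1; lra).
    rewrite sin_PI2 in Hx; lra.
Qed.

Lemma c0_bounds : cos W0 <= c0 < 1.
Proof.
  pose proof PI_gt_2. unfold c0, W0. split.
  - apply cos_decr_1; lra.
  - assert (Hx : cos (1/5) < cos 0) by (apply cos_decreasing_1; lra).
    rewrite cos_0 in Hx; lra.
Qed.

Lemma clamp_id s : Rabs s <= s1 -> clamp s = s.
Proof. intros. pose proof s1_bounds. pose proof sin_W0_pos. unfold clamp. destruct_Rabs. Qed.

Lemma clamp_bound s : - s1 <= clamp s <= s1.
Proof. pose proof s1_bounds. pose proof sin_W0_pos. unfold clamp. destruct_Rabs. Qed.

Lemma clamp_0 : clamp 0 = 0.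
Proof. apply clamp_id. rewrite Rabs_R0. pose proof s1_bounds. pose proof sin_W0_pos. lra. Qed.

Lemma plateau_small v : Rabs v <= E0 -> plateau v = 0.
Proof. intros. unfold plateau, E0, W0 in *. destruct_Rabs. Qed.
Lemma plateau_pos v : E0 <= v <= W0 -> plateau v = 2 * E0 - 2 * v.
Proof. intros. unfold plateau, E0, W0 in *. destruct_Rabs. Qed.
Lemma plateau_neg v : - W0 <= v <= - E0 -> plateau v = - 2 * E0 - 2 * v.
Proof. intros. unfold plateau, E0, W0 in *. destruct_Rabs. Qed.
Lemma plateau_big v : W0 <= v -> plateau v = - 2 * (W0 - E0).
Proof. intros. unfold plateau, E0, W0 in *. destruct_Rabs. Qed.

Lemma asin_clamp_sin v : Rabs v <= W0 -> asin (clamp (sin v)) = v.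
Proof.
  intros Hv. apply Rabs_le_inv in Hv. pose proof PI_gt_2. pose proof s1_bounds.
  assert (Rabs (sin v) <= sin W0).
  { apply Rabs_le. rewrite <- sin_neg. split; apply sin_incr_1; unfold W0 in *; lra. }
  rewrite clamp_id by lra. apply asin_sin. unfold W0 in *; lra.
Qed.

Lemma Phi_period_Z t k : Phi (t + 2 * PI * IZR k) = Phi t + 2 * PI * IZR (2 * k).
Proof. unfold Phi. rewrite sin_period_Z, mult_IZR. ring. Qed.

Lemma radial_period_Z t k : radial (t + 2 * PI * IZR k) = radial t.
Proof. unfold radial. now rewrite cos_period_Z. Qed.

Lemma Phi_0 : Phi 0 = 0.
Proof.
  unfold Phi. rewrite sin_0, clamp_0, asin_0, plateau_small; [ring|].
  rewrite Rabs_R0. unfold E0; lra.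
Qed.

Lemma Phi_PI : Phi PI = 2 * PI.
Proof.
  unfold Phi. rewrite sin_PI, clamp_0, asin_0, plateau_small; [ring|].
  rewrite Rabs_R0. unfold E0; lra.
Qed.

Definition phi_arc (v : R) : R := 2 * v + plateau v.

Lemma Phi_on_arc v k : Rabs v <= W0 ->
  Phi (v + 2 * PI * IZR k) = phi_arc v + 2 * PI * IZR (2 * k).
Proof. intros Hv. rewrite Phi_period_Z. unfold Phi, phi_arc. now rewrite asin_clamp_sin. Qed.

Lemma phi_arc_small v : Rabs v <= E0 -> phi_arc v = 2 * v.
Proof. intros. unfold phi_arc. rewrite plateau_small; auto; ring. Qed.
Lemma phi_arc_pos v : E0 <= v <= W0 -> phi_arc v = 2 * E0.
Proof. intros. unfold phi_arc. rewrite plateau_pos; auto; ring. Qed.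
Lemma phi_arc_neg v : - W0 <= v <= - E0 -> phi_arc v = - 2 * E0.
Proof. intros. unfold phi_arc. rewrite plateau_neg; auto; ring. Qed.

Lemma phi_arc_bound v : Rabs v <= W0 -> Rabs (phi_arc v) <= 2 * E0.
Proof.
  intros Hv. apply Rabs_le_inv in Hv.
  destruct (Rle_dec v (- E0)); [rewrite phi_arc_neg by lra|].
  2: destruct (Rle_dec E0 v); [rewrite phi_arc_pos by lra| rewrite phi_arc_small by destruct_Rabs].
  all: unfold E0 in *; destruct_Rabs.
Qed.

Lemma phi_arc_expands v : Rabs v <= W0 -> Rmin (2 * Rabs v) (2 * E0) <= Rabs (phi_arc v).
Proof.
  intros Hv. apply Rabs_le_inv in Hv.
  destruct (Rle_dec v (- E0)); [rewrite phi_arc_neg by lra|].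
  2: destruct (Rle_dec E0 v); [rewrite phi_arc_pos by lra| rewrite phi_arc_small by destruct_Rabs].
  all: unfold Rmin; destruct Rle_dec; unfold E0 in *; destruct_Rabs.
Qed.

Definition arc_fixed_point (v : R) : Prop := v = 0 \/ v = 2 * E0 \/ v = - 2 * E0.

Lemma phi_arc_fixed v : arc_fixed_point v -> phi_arc v = v.
Proof.
  intros [->|[->| ->]].
  - rewrite phi_arc_small; [ring| unfold E0; destruct_Rabs].
  - apply phi_arc_pos; unfold E0, W0; lra.
  - apply phi_arc_neg; unfold E0, W0; lra.
Qed.

Lemma radial_profile_1 : radial_profile 1 = 1/2.
Proof.
  pose proof c0_bounds. unfold radial_profile.
  replace ((1 - c0) / (1 - c0)) with 1 by (field; lra). destruct_Rabs.
Qed.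

Lemma radial_profile_low c : c <= c0 -> radial_profile c = 2.
Proof.
  intros Hc. pose proof c0_bounds. unfold radial_profile.
  assert ((c - c0) / (1 - c0) <= 0).
  { apply Rmult_le_reg_r with (1 - c0); [lra|]. field_simplify; lra. }
  destruct_Rabs.
Qed.

Lemma radial_bounds t : 1/2 <= radial t <= 2.
Proof.
  pose proof c0_bounds. pose proof (COS_bound t). unfold radial, radial_profile.
  assert ((cos t - c0) / (1 - c0) <= 1).
  { apply Rmult_le_reg_r with (1 - c0); [lra|]. field_simplify; lra. }
  destruct_Rabs.
Qed.

Lemma radial_off_arc t : cos t <= cos W0 -> radial t = 2.
Proof. intros. pose proof c0_bounds. apply radial_profile_low. lra. Qed.

Lemma radial_at_2E0 k :
  radial (2 * E0 + 2 * PI * IZR k) = 2 /\ radial (- 2 * E0 + 2 * PI * IZR k) = 2.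
Proof.
  unfold radial. rewrite !cos_period_Z. replace (-2 * E0) with (- (2 * E0)) by ring.
  rewrite cos_neg. replace (2 * E0) with (1/5) by (unfold E0; lra).
  split; apply radial_profile_low; unfold c0; lra.
Qed.

Lemma radial_0 : radial 0 = 1/2.
Proof. unfold radial. rewrite cos_0. apply radial_profile_1. Qed.

Lemma radial_at_0 k : radial (2 * PI * IZR k) = 1/2.
Proof.
  replace (2 * PI * IZR k) with (0 + 2 * PI * IZR k) by ring.
  rewrite radial_period_Z. apply radial_0.
Qed.

Lemma radial_PI : radial PI = 2.
Proof. apply radial_off_arc. rewrite cos_PI. apply COS_bound. Qed.

Lemma continuity_plateau x : continuity_pt plateau x.
Proof. unfold plateau. cont. Qed.

Lemma continuity_clamp x : continuity_pt clamp x.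
Proof. unfold clamp, Rdiv. cont. Qed.

Lemma continuity_asin_clamp x : continuity_pt (fun s => asin (clamp s)) x.
Proof.
  apply (cpt_comp clamp asin); [apply continuity_clamp|].
  apply derivable_continuous_pt, derivable_pt_asin.
  pose proof (clamp_bound x). pose proof s1_bounds. pose proof sin_W0_pos. lra.
Qed.

Lemma continuity_Phi x : continuity_pt Phi x.
Proof.
  unfold Phi. apply cpt_plus; [cont|].
  apply (cpt_comp (fun y => asin (clamp (sin y))) plateau); [|apply continuity_plateau].
  apply (cpt_comp sin (fun s => asin (clamp s)));
    [apply continuity_sin| apply continuity_asin_clamp].
Qed.

Lemma continuity_radial_profile x : continuity_pt radial_profile x.
Proof. unfold radial_profile, Rdiv. cont. Qed.

Lemma continuity_radial x : continuity_pt radial x.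
Proof.
  apply (cpt_comp cos radial_profile); [apply continuity_cos| apply continuity_radial_profile].
Qed.

(** * Periodic angles *)

Definition Phi_iter (n : nat) : R -> R := Nat.iter n Phi.

Fixpoint radial_prod (n : nat) (t : R) : R :=
  match n with O => 1 | S m => radial_prod m t * radial (Phi_iter m t) end.

Lemma Phi_iter_S n t : Phi_iter (S n) t = Phi (Phi_iter n t).
Proof. reflexivity. Qed.

Lemma Phi_iter_add a b t : Phi_iter (a + b) t = Phi_iter a (Phi_iter b t).
Proof. apply Nat.iter_add. Qed.

Lemma Phi_iter_period_Z n t k :
  Phi_iter n (t + 2 * PI * IZR k) = Phi_iter n t + 2 * PI * IZR (2 ^ Z.of_nat n * k).
Proof.
  revert t k. induction n as [|n IH]; intros t k.
  - now rewrite Z.mul_1_l.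
  - rewrite !Phi_iter_S, IH, Phi_period_Z, Nat2Z.inj_succ, Z.pow_succ_r by lia.
    do 3 f_equal. ring.
Qed.

Lemma radial_prod_period_Z n t k : radial_prod n (t + 2 * PI * IZR k) = radial_prod n t.
Proof.
  induction n as [|n IH]; simpl; auto.
  now rewrite IH, Phi_iter_period_Z, radial_period_Z.
Qed.

Lemma radial_prod_pos n t : 0 < radial_prod n t.
Proof.
  induction n as [|n IH]; simpl; [lra|].
  pose proof (radial_bounds (Phi_iter n t)). apply Rmult_lt_0_compat; lra.
Qed.

Lemma radial_prod_const n t c :
  (forall j, (j < n)%nat -> radial (Phi_iter j t) = c) -> radial_prod n t = c ^ n.
Proof.
  induction n as [|n IH]; intros Hj; simpl; auto.
  rewrite IH by (intros; apply Hj; lia). rewrite Hj by lia. ring.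
Qed.

Definition in_arc (t : R) : Prop := cos W0 <= cos t.

Lemma cos_Rabs x : cos (Rabs x) = cos x.
Proof. unfold Rabs. destruct Rcase_abs; auto using cos_neg. Qed.

Lemma in_arc_reduce t :
  in_arc t -> exists v m, t = v + 2 * PI * IZR m /\ Rabs v <= W0.
Proof.
  intros Ht. destruct (angle_reduce t) as [m [v [-> Hr]]]. exists v, m. split; auto.
  unfold in_arc in Ht. rewrite cos_period_Z, <- (cos_Rabs v) in Ht. pose proof PI_gt_2.
  destruct (Rle_dec (Rabs v) W0) as [|Hn]; auto.
  assert (cos (Rabs v) < cos W0) by (apply cos_decreasing_1; unfold W0 in *; destruct_Rabs).
  lra.
Qed.

Lemma in_arc_of_reduced v m : Rabs v <= W0 -> in_arc (v + 2 * PI * IZR m).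
Proof.
  intros Hv. unfold in_arc. rewrite cos_period_Z, <- (cos_Rabs v). pose proof PI_gt_2.
  apply cos_decr_1; unfold W0 in *; destruct_Rabs.
Qed.

Lemma in_arc_Phi t : in_arc t -> in_arc (Phi t).
Proof.
  intros Ht. destruct (in_arc_reduce t Ht) as [v [m [-> Hv]]]. rewrite Phi_on_arc by auto.
  apply in_arc_of_reduced. pose proof (phi_arc_bound v Hv). unfold E0, W0 in *. lra.
Qed.

Lemma in_arc_Phi_iter j t : in_arc t -> in_arc (Phi_iter j t).
Proof. induction j; intros; simpl; auto. now apply in_arc_Phi, IHj. Qed.

Lemma two_pow_ge_2 n : (1 <= n)%nat -> 2 <= 2 ^ n.
Proof.
  intros Hn. replace n with (S (n - 1)) by lia. simpl.
  pose proof (pow_R1_Rle 2 (n - 1)). lra.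
Qed.

Lemma half_pow_bounds k : 0 <= (1/2) ^ k <= 1.
Proof.
  split; [apply pow_le; lra|].
  pose proof (pow_incr (1/2) 1 k ltac:(lra)) as Hle. now rewrite pow1 in Hle.
Qed.

Lemma half_pow_le_half n : (1 <= n)%nat -> (1/2) ^ n <= 1/2.
Proof.
  intros Hn. replace n with (S (n - 1)) by lia. simpl.
  pose proof (half_pow_bounds (n - 1)). lra.
Qed.

Definition phi_arc_iter (n : nat) : R -> R := Nat.iter n phi_arc.

Lemma phi_arc_iter_bound j v : Rabs v <= W0 -> Rabs (phi_arc_iter j v) <= W0.
Proof.
  induction j; intros Hv; simpl; auto.
  pose proof (phi_arc_bound _ (IHj Hv)). unfold E0, W0 in *; lra.
Qed.

Lemma Phi_iter_on_arc j v m : Rabs v <= W0 ->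
  exists mj, Phi_iter j (v + 2 * PI * IZR m) = phi_arc_iter j v + 2 * PI * IZR mj.
Proof.
  intros Hv. induction j as [|j [mj IH]]; [now exists m|].
  exists (2 * mj)%Z. rewrite Phi_iter_S, IH, Phi_on_arc by (now apply phi_arc_iter_bound).
  reflexivity.
Qed.

Lemma phi_arc_iter_expands n v : Rabs v <= W0 ->
  Rmin (2 ^ n * Rabs v) (2 * E0) <= Rabs (phi_arc_iter n v).
Proof.
  intros Hv. induction n as [|n IH].
  - simpl. unfold Rmin. destruct Rle_dec; lra.
  - change (phi_arc_iter (S n) v) with (phi_arc (phi_arc_iter n v)).
    change (2 ^ S n) with (2 * 2 ^ n).
    pose proof (phi_arc_expands _ (phi_arc_iter_bound n v Hv)) as Hstep.
    pose proof (Rabs_pos v). pose proof (pow_le 2 n ltac:(lra)).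
    revert IH Hstep. unfold Rmin, E0. repeat destruct Rle_dec; nra.
Qed.

Lemma phi_arc_iter_fixed j v : phi_arc v = v -> phi_arc_iter j v = v.
Proof. intros Hv. induction j; simpl; auto. rewrite IHj. exact Hv. Qed.

(* Orbits starting at |v| > E0 land on ±2 E0 at once, and smaller nonzero
   orbits grow in modulus. *)
Lemma phi_arc_periodic n v : (1 <= n)%nat -> Rabs v <= W0 -> phi_arc_iter n v = v ->
  arc_fixed_point v.
Proof.
  intros Hn Hv Hper. pose proof (Rabs_le_inv _ _ Hv) as Hv'.
  destruct (Rle_dec v (- E0)) as [Hl|Hl]; [|destruct (Rle_dec E0 v) as [Hr|Hr]].
  - right; right. rewrite <- Hper. replace n with (S (n - 1)) by lia.
    unfold phi_arc_iter. rewrite Nat.iter_succ_r, phi_arc_neg by lra.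
    apply phi_arc_iter_fixed, phi_arc_fixed. now right; right.
  - right; left. rewrite <- Hper. replace n with (S (n - 1)) by lia.
    unfold phi_arc_iter. rewrite Nat.iter_succ_r, phi_arc_pos by lra.
    apply phi_arc_iter_fixed, phi_arc_fixed. now right; left.
  - left. pose proof (phi_arc_iter_expands n v Hv) as Hexp. rewrite Hper in Hexp.
    pose proof (two_pow_ge_2 n Hn).
    pose proof (Rabs_pos v). destruct (Req_dec (Rabs v) 0) as [Hv0|Hv0]; [destruct_Rabs|].
    revert Hexp. unfold Rmin, E0 in *. destruct Rle_dec; intros; destruct_Rabs; nra.
Qed.

Lemma periodic_angle_on_arc n t k : (1 <= n)%nat -> in_arc t ->
  Phi_iter n t = t + 2 * PI * IZR k ->
  exists v m, arc_fixed_point v /\ t = v + 2 * PI * IZR m.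
Proof.
  intros Hn Ht Hper. destruct (in_arc_reduce t Ht) as [v [m [-> Hv]]].
  exists v, m. split; auto. apply (phi_arc_periodic n); auto.
  destruct (Phi_iter_on_arc n v m Hv) as [mn Hmn]. rewrite Hmn in Hper.
  pose proof (phi_arc_iter_bound n v Hv) as Hb.
  assert (Hd : phi_arc_iter n v - v = 2 * PI * IZR (m + k - mn))
    by (rewrite minus_IZR, plus_IZR; lra).
  assert (Hz : (m + k - mn)%Z = 0%Z).
  { apply IZR_2PI_small. rewrite <- Hd. pose proof PI_gt_2.
    apply Rabs_le_inv in Hv. apply Rabs_le_inv in Hb. unfold W0 in *. apply Rabs_def1; lra. }
  rewrite Hz in Hd. simpl in Hd. lra.
Qed.

Lemma Phi_iter_fixed_angle j v m : arc_fixed_point v ->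
  exists mj, Phi_iter j (v + 2 * PI * IZR m) = v + 2 * PI * IZR mj.
Proof.
  intros Hv.
  assert (Hvb : Rabs v <= W0) by (destruct Hv as [->|[->| ->]]; unfold E0, W0; destruct_Rabs).
  destruct (Phi_iter_on_arc j v m Hvb) as [mj ->]. exists mj.
  now rewrite phi_arc_iter_fixed by (now apply phi_arc_fixed).
Qed.

Lemma radial_prod_fixed_angle n v m : arc_fixed_point v ->
  radial_prod n (v + 2 * PI * IZR m) = if Req_EM_T v 0 then (1/2) ^ n else 2 ^ n.
Proof.
  intros Hv. destruct Req_EM_T as [Hv0|Hv0]; apply radial_prod_const; intros j _;
    destruct (Phi_iter_fixed_angle j v m Hv) as [mj ->].
  - rewrite Hv0, Rplus_0_l. apply radial_at_0.
  - destruct Hv as [Hv|[-> | ->]]; [contradiction| apply radial_at_2E0..].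
Qed.

Lemma radial_prod_off_arc n t k : ~ in_arc t ->
  Phi_iter n t = t + 2 * PI * IZR k -> radial_prod n t = 2 ^ n.
Proof.
  intros Ht Hper. apply radial_prod_const. intros j Hj. apply radial_off_arc.
  destruct (Rlt_le_dec (cos (Phi_iter j t)) (cos W0)) as [|Hc]; [lra|]. exfalso. apply Ht.
  assert (Hs : in_arc (Phi_iter n t)).
  { replace n with ((n - j) + j)%nat by lia. rewrite Phi_iter_add. now apply in_arc_Phi_iter. }
  unfold in_arc in *. now rewrite Hper, cos_period_Z in Hs.
Qed.

Lemma radial_prod_periodic n t k : (1 <= n)%nat -> Phi_iter n t = t + 2 * PI * IZR k ->
  radial_prod n t = 2 ^ n \/ ((exists m, t = 2 * PI * IZR m) /\ radial_prod n t = (1/2) ^ n).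
Proof.
  intros Hn Hper. destruct (Rle_dec (cos W0) (cos t)) as [Ht|Ht].
  - destruct (periodic_angle_on_arc n t k Hn Ht Hper) as [v [m [Hv ->]]].
    rewrite radial_prod_fixed_angle by auto.
    destruct Req_EM_T as [->|]; [right| left; reflexivity].
    split; [exists m; ring| reflexivity].
  - left. now apply (radial_prod_off_arc n t k).
Qed.

(** * The planar map *)

Definition norm2 (x : R2) : R := sqrt (fst x ^ 2 + snd x ^ 2).

(* With c = cos t and s = sin t, the coordinates are r H(t) times
   cos/sin of 2t + plateau(...) expanded through the double-angle formulas. *)
Definition polar_map (x : R2) : R2 :=
  let N := norm2 x in let c := fst x / N in let s := snd x / N in
  let g := plateau (asin (clamp s)) in let A := c * c - s * s in let B := 2 * c * s in
  (N * radial_profile c * (cos g * A - sin g * B),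
   N * radial_profile c * (sin g * A + cos g * B)).

Lemma norm2_polar r t : 0 <= r -> norm2 (r * cos t, r * sin t) = r.
Proof.
  intros Hr. unfold norm2; cbn [fst snd].
  replace ((r * cos t) ^ 2 + (r * sin t) ^ 2) with (r * r)
    by (pose proof (sin2_cos2 t) as Hsc; unfold Rsqr in Hsc; nra).
  now apply sqrt_square.
Qed.

Lemma dist2_0 x : dist2 x (0, 0) = norm2 x.
Proof. destruct x. unfold dist2, norm2; simpl. f_equal; ring. Qed.

Lemma unit_vector_angle c s : c ^ 2 + s ^ 2 = 1 -> exists t, c = cos t /\ s = sin t.
Proof.
  intros Hcs. assert (Hc : -1 <= c <= 1) by nra.
  assert (Hs : sqrt (1 - c²) = Rabs s).
  { rewrite <- sqrt_Rsqr_abs. f_equal. unfold Rsqr. nra. }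
  destruct (Rle_dec 0 s).
  - exists (acos c). rewrite cos_acos, sin_acos, Hs, Rabs_right by (auto; lra). auto.
  - exists (- acos c). rewrite cos_neg, sin_neg, cos_acos, sin_acos, Hs, Rabs_left by (auto; lra).
    split; [reflexivity| ring].
Qed.

Lemma polar_decomposition x :
  exists r t, 0 <= r /\ r = norm2 x /\ x = (r * cos t, r * sin t).
Proof.
  destruct x as [a b]. set (r := norm2 (a, b)).
  assert (Hr : 0 <= r) by apply sqrt_pos.
  assert (Hr2 : r * r = a * a + b * b) by (unfold r, norm2; simpl; rewrite sqrt_sqrt; nra).
  destruct (Req_dec r 0) as [Hr0|Hr0].
  - exists 0, 0. repeat split; auto; [lra|]. f_equal; nra.
  - destruct (unit_vector_angle (a / r) (b / r)) as [t [Ht1 Ht2]].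
    { replace ((a / r) ^ 2 + (b / r) ^ 2) with ((a * a + b * b) / (r * r)) by (field; lra).
      rewrite <- Hr2. field. lra. }
    exists r, t. repeat split; auto. rewrite <- Ht1, <- Ht2. f_equal; field; lra.
Qed.

Lemma polar_map_polar r t : 0 <= r ->
  polar_map (r * cos t, r * sin t) = (r * radial t * cos (Phi t), r * radial t * sin (Phi t)).
Proof.
  intros Hr. unfold polar_map. rewrite norm2_polar by auto. simpl.
  destruct (Req_dec r 0) as [->|Hr0]; [f_equal; ring|].
  replace (r * cos t / r) with (cos t) by (field; auto).
  replace (r * sin t / r) with (sin t) by (field; auto).
  unfold radial, Phi. rewrite cos_plus, sin_plus, cos_2a, sin_2a. f_equal; ring.
Qed.

Lemma polar_map_iter n r t : 0 <= r ->
  iter2 n polar_map (r * cos t, r * sin t) =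
  (r * radial_prod n t * cos (Phi_iter n t), r * radial_prod n t * sin (Phi_iter n t)).
Proof.
  revert r t. induction n as [|n IH]; intros r t Hr; [simpl; f_equal; ring|].
  change (iter2 (S n) polar_map (r * cos t, r * sin t))
    with (polar_map (iter2 n polar_map (r * cos t, r * sin t))).
  pose proof (radial_prod_pos n t).
  rewrite IH, polar_map_polar by nra. simpl. f_equal; ring.
Qed.

Lemma polar_map_0 : polar_map (0, 0) = (0, 0).
Proof.
  replace (0, 0) with (0 * cos 0, 0 * sin 0) by (f_equal; ring).
  rewrite polar_map_polar by lra. f_equal; ring.
Qed.

Definition cont2 (g : R2 -> R) (x : R2) : Prop :=
  forall eps, 0 < eps ->
    exists del, 0 < del /\ forall y, dist2 y x < del -> Rabs (g y - g x) < eps.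

Lemma dist2_fst x y : Rabs (fst y - fst x) <= dist2 y x.
Proof.
  unfold dist2. rewrite <- sqrt_Rsqr_abs. apply sqrt_le_1_alt.
  pose proof (pow2_ge_0 (snd y - snd x)). unfold Rsqr. lra.
Qed.

Lemma dist2_snd x y : Rabs (snd y - snd x) <= dist2 y x.
Proof.
  unfold dist2. rewrite <- sqrt_Rsqr_abs. apply sqrt_le_1_alt.
  pose proof (pow2_ge_0 (fst y - fst x)). unfold Rsqr. lra.
Qed.

Lemma dist2_le_sum a b : dist2 a b <= Rabs (fst a - fst b) + Rabs (snd a - snd b).
Proof.
  unfold dist2. set (u := fst a - fst b). set (v := snd a - snd b).
  pose proof (Rabs_pos u). pose proof (Rabs_pos v).
  rewrite <- (sqrt_square (Rabs u + Rabs v)) by lra. apply sqrt_le_1_alt.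
  assert (Rabs u * Rabs u = u * u) by (unfold Rabs; destruct Rcase_abs; ring).
  assert (Rabs v * Rabs v = v * v) by (unfold Rabs; destruct Rcase_abs; ring).
  nra.
Qed.

Lemma cont2_const c x : cont2 (fun _ => c) x.
Proof.
  intros eps He. exists 1. split; [lra|]. intros.
  unfold Rminus. now rewrite Rplus_opp_r, Rabs_R0.
Qed.

Lemma cont2_fst x : cont2 fst x.
Proof. intros eps He. exists eps. split; auto. intros y Hy. pose proof (dist2_fst x y). lra. Qed.

Lemma cont2_snd x : cont2 snd x.
Proof. intros eps He. exists eps. split; auto. intros y Hy. pose proof (dist2_snd x y). lra. Qed.

Lemma cont2_plus f g x : cont2 f x -> cont2 g x -> cont2 (fun y => f y + g y) x.
Proof.
  intros Hf Hg eps He. destruct (Hf (eps / 2)) as [d1 [Hd1 H1]]; [lra|].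
  destruct (Hg (eps / 2)) as [d2 [Hd2 H2]]; [lra|].
  exists (Rmin d1 d2). split; [now apply Rmin_glb_lt|]. intros y Hy.
  specialize (H1 y ltac:(pose proof (Rmin_l d1 d2); lra)).
  specialize (H2 y ltac:(pose proof (Rmin_r d1 d2); lra)).
  replace (f y + g y - (f x + g x)) with ((f y - f x) + (g y - g x)) by ring.
  pose proof (Rabs_triang (f y - f x) (g y - g x)). lra.
Qed.

Lemma cont2_comp f k x : cont2 f x -> continuity_pt k (f x) -> cont2 (fun y => k (f y)) x.
Proof.
  intros Hf Hk eps He. destruct (continuity_pt_eps k (f x) Hk eps He) as [alp [Ha Hz]].
  destruct (Hf alp Ha) as [d [Hd Hy]]. exists d. split; auto.
Qed.

Lemma cont2_opp f x : cont2 f x -> cont2 (fun y => - f y) x.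
Proof. intros. apply (cont2_comp f Ropp); auto. apply (cpt_opp (fun y => y)), cpt_id. Qed.

Lemma cont2_minus f g x : cont2 f x -> cont2 g x -> cont2 (fun y => f y - g y) x.
Proof. intros. apply (cont2_plus f (fun y => - g y)); auto. now apply cont2_opp. Qed.

(* Products reduce to squares by polarization: f g = ((f + g)^2 - (f - g)^2) / 4. *)
Lemma cont2_mult f g x : cont2 f x -> cont2 g x -> cont2 (fun y => f y * g y) x.
Proof.
  intros Hf Hg.
  assert (Hsq : forall z, continuity_pt (fun w => w * w / 4) z) by (intros; unfold Rdiv; cont).
  assert (Hq : cont2 (fun y => (f y + g y) * (f y + g y) / 4 - (f y - g y) * (f y - g y) / 4) x).
  { apply cont2_minus.
    - apply (cont2_comp (fun y => f y + g y) (fun w => w * w / 4)); auto. now apply cont2_plus.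
    - apply (cont2_comp (fun y => f y - g y) (fun w => w * w / 4)); auto. now apply cont2_minus. }
  intros eps He. destruct (Hq eps He) as [d [Hd Hy]]. exists d. split; auto. intros y Hyd.
  specialize (Hy y Hyd). replace (f y * g y - f x * g x) with
    ((f y + g y) * (f y + g y) / 4 - (f y - g y) * (f y - g y) / 4 -
     ((f x + g x) * (f x + g x) / 4 - (f x - g x) * (f x - g x) / 4)) by field. auto.
Qed.

Lemma cont2_inv f x : cont2 f x -> f x <> 0 -> cont2 (fun y => / f y) x.
Proof.
  intros Hf Hn. apply (cont2_comp f Rinv); auto.
  apply (continuity_pt_inv (fun y => y)); auto. apply cpt_id.
Qed.

Lemma cont2_norm2 x : cont2 norm2 x.
Proof.
  apply (cont2_comp (fun y => fst y ^ 2 + snd y ^ 2) sqrt).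
  - simpl. apply cont2_plus; apply cont2_mult;
      auto using cont2_fst, cont2_snd, cont2_mult, cont2_const.
  - apply continuity_pt_sqrt. nra.
Qed.

Lemma cont2_polar_map_coords x : norm2 x <> 0 ->
  cont2 (fun y => fst (polar_map y)) x /\ cont2 (fun y => snd (polar_map y)) x.
Proof.
  intros Hx. pose proof (cont2_norm2 x) as HN.
  assert (HiN : cont2 (fun y => / norm2 y) x) by (now apply cont2_inv).
  assert (Hc : cont2 (fun y => fst y / norm2 y) x) by (apply cont2_mult; auto using cont2_fst).
  assert (Hs : cont2 (fun y => snd y / norm2 y) x) by (apply cont2_mult; auto using cont2_snd).
  assert (Hg : cont2 (fun y => plateau (asin (clamp (snd y / norm2 y)))) x).
  { apply (cont2_comp (fun y => asin (clamp (snd y / norm2 y))) plateau);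
      [|apply continuity_plateau].
    apply (cont2_comp (fun y => snd y / norm2 y) (fun s => asin (clamp s))); auto.
    apply continuity_asin_clamp. }
  assert (Hcg : cont2 (fun y => cos (plateau (asin (clamp (snd y / norm2 y))))) x)
    by (apply (cont2_comp _ cos); auto; apply continuity_cos).
  assert (Hsg : cont2 (fun y => sin (plateau (asin (clamp (snd y / norm2 y))))) x)
    by (apply (cont2_comp _ sin); auto; apply continuity_sin).
  assert (Hh : cont2 (fun y => radial_profile (fst y / norm2 y)) x)
    by (apply (cont2_comp _ radial_profile); auto; apply continuity_radial_profile).
  unfold polar_map. cbn [fst snd].
  split; repeat first [exact Hh | exact Hcg | exact Hsg | exact Hc | exact Hs | exact HN
    | apply cont2_const | apply cont2_mult | apply cont2_minus | apply cont2_plus].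
Qed.

Lemma continuous_polar_map : continuous2 polar_map.
Proof.
  intros x eps He.
  destruct (polar_decomposition x) as [r [t [Hr [Hrn Hx]]]].
  destruct (Req_dec (norm2 x) 0) as [H0|H0].
  - replace x with (0, 0) by (rewrite Hx, Hrn, H0; f_equal; ring).
    exists (eps / 2). split; [lra|]. intros y Hy. rewrite polar_map_0, dist2_0.
    destruct (polar_decomposition y) as [s [u [Hs [Hsn ->]]]]. rewrite dist2_0, <- Hsn in Hy.
    pose proof (radial_bounds u).
    rewrite polar_map_polar, norm2_polar by nra. nra.
  - destruct (cont2_polar_map_coords x H0) as [H1 H2].
    destruct (H1 (eps / 2)) as [d1 [Hd1 P1]]; [lra|].
    destruct (H2 (eps / 2)) as [d2 [Hd2 P2]]; [lra|].
    exists (Rmin d1 d2). split; [now apply Rmin_glb_lt|]. intros y Hy.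
    specialize (P1 y ltac:(pose proof (Rmin_l d1 d2); lra)).
    specialize (P2 y ltac:(pose proof (Rmin_r d1 d2); lra)).
    pose proof (dist2_le_sum (polar_map y) (polar_map x)). lra.
Qed.

(** * Periodic points and invariant sets *)

Lemma radial_prod_periodic_ne_1 n t k : (1 <= n)%nat ->
  Phi_iter n t = t + 2 * PI * IZR k -> radial_prod n t <> 1.
Proof.
  intros Hn Hper Heq. pose proof (two_pow_ge_2 n Hn). pose proof (half_pow_le_half n Hn).
  destruct (radial_prod_periodic n t k Hn Hper) as [Hd|[_ Hd]]; lra.
Qed.

Lemma polar_map_iter_fixed n x : (1 <= n)%nat -> iter2 n polar_map x = x -> x = (0, 0).
Proof.
  intros Hn Hfix. destruct (polar_decomposition x) as [r [t [Hr [_ ->]]]].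
  destruct (Req_dec r 0) as [->|Hr0]; [f_equal; ring|]. exfalso.
  rewrite polar_map_iter in Hfix by auto. injection Hfix as H1 H2.
  set (R := radial_prod n t) in *.
  assert (Hc : R * cos (Phi_iter n t) = cos t) by (apply Rmult_eq_reg_l with r; lra).
  assert (Hs : R * sin (Phi_iter n t) = sin t) by (apply Rmult_eq_reg_l with r; lra).
  assert (HR : R = 1).
  { pose proof (sin2_cos2 t) as E1. pose proof (sin2_cos2 (Phi_iter n t)) as E2.
    unfold Rsqr in *. pose proof (radial_prod_pos n t) as Hpos. fold R in Hpos.
    rewrite <- Hc, <- Hs in E1. nra. }
  rewrite HR, Rmult_1_l in Hc, Hs.
  destruct (cos_sin_eq_period _ _ Hc Hs) as [k Hk].
  exact (radial_prod_periodic_ne_1 n t k Hn Hk HR).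
Qed.

Definition pt (r t : R) : R2 := (r * cos t, r * sin t).

Lemma polar_map_pt r t : 0 <= r -> polar_map (pt r t) = pt (r * radial t) (Phi t).
Proof. apply polar_map_polar. Qed.

Lemma asin_ge_W0 z : sin W0 <= z <= 1 -> W0 <= asin z.
Proof.
  intros Hz. pose proof PI_gt_2. pose proof (asin_bound z).
  destruct (Rle_dec W0 (asin z)) as [|Hn]; auto.
  assert (Hl : sin (asin z) < sin W0) by (apply sin_increasing_1; unfold W0 in *; lra).
  rewrite sin_asin in Hl by (pose proof sin_W0_pos; lra). lra.
Qed.

Lemma Phi_upper_arc t : W0 <= t <= PI - W0 -> Phi t = 2 * t - 2 * (W0 - E0) /\ radial t = 2.
Proof.
  intros Ht. pose proof PI_gt_2. split.
  - unfold Phi. rewrite plateau_big; [ring|]. apply asin_ge_W0.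
    assert (Hs : sin W0 <= sin t).
    { destruct (Rle_dec t (PI / 2)).
      - apply sin_incr_1; unfold W0 in *; lra.
      - rewrite <- (sin_PI_x t). apply sin_incr_1; unfold W0 in *; lra. }
    pose proof s1_bounds. pose proof (SIN_bound t). unfold clamp. destruct_Rabs.
  - apply radial_off_arc. apply cos_decr_1; unfold W0 in *; lra.
Qed.

Fixpoint back_angle (j : nat) : R :=
  match j with O => PI | S j' => back_angle j' / 2 + (W0 - E0) end.

Lemma back_angle_upper_arc j : W0 <= back_angle (S j) <= PI - W0.
Proof.
  pose proof PI_gt_2. pose proof PI2_1.
  induction j; simpl in *; unfold W0, E0 in *; lra.
Qed.

Lemma Phi_back_angle j : Phi (back_angle (S j)) = back_angle j /\ radial (back_angle (S j)) = 2.
Proof.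
  destruct (Phi_upper_arc _ (back_angle_upper_arc j)) as [-> ->]. split; auto.
  simpl. field.
Qed.

(* A full orbit tending to the origin in both directions of time: forward
   along the ray of angle 0, where the radius halves, and backward through the
   angles [back_angle j], where it halves as well. *)
Definition homoclinic_orbit (r0 : R) (z : Z) : R2 :=
  if Z_le_dec 0 z then pt (r0 * (1/2) ^ Z.to_nat z) 0
  else pt (r0 * (1/2) ^ Z.to_nat (- z)) (back_angle (Z.to_nat (- z) - 1)).

Lemma homoclinic_orbit_step r0 n : 0 < r0 ->
  polar_map (homoclinic_orbit r0 n) = homoclinic_orbit r0 (n + 1).
Proof.
  intros Hr. unfold homoclinic_orbit.
  assert (Hp : forall k, 0 <= r0 * (1/2) ^ k)
    by (intros; apply Rmult_le_pos; [lra| apply pow_le; lra]).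
  destruct (Z_le_dec 0 n) as [Hn0|Hn0]; destruct (Z_le_dec 0 (n + 1)) as [Hn1|Hn1]; try lia;
    rewrite polar_map_pt by auto.
  - rewrite Phi_0, radial_0, Z2Nat.inj_add, Nat.add_1_r by lia.
    simpl. f_equal. field.
  - replace n with (-1)%Z by lia. simpl.
    rewrite Phi_PI, radial_PI. unfold pt.
    replace (2 * PI) with (0 + 2 * PI * IZR 1) by (simpl; ring).
    rewrite cos_period_Z, sin_period_Z. f_equal; field.
  - set (m := (Z.to_nat (- (n + 1)) - 1)%nat).
    replace (Z.to_nat (- n)) with (S (S m)) by lia.
    replace (Z.to_nat (- (n + 1))) with (S m) by lia.
    replace (S (S m) - 1)%nat with (S m) by lia.
    destruct (Phi_back_angle m) as [-> ->]. simpl. f_equal. field.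
Qed.

Lemma homoclinic_orbit_small r0 n : 0 < r0 -> norm2 (homoclinic_orbit r0 n) <= r0.
Proof.
  intros Hr. unfold homoclinic_orbit, pt.
  destruct (Z_le_dec 0 n); [set (k := Z.to_nat n)| set (k := Z.to_nat (- n))];
    destruct (half_pow_bounds k); rewrite norm2_polar; nra.
Qed.

Lemma polar_map_not_isolated : ~ isolated_invariant_singleton polar_map (0, 0).
Proof.
  intros [N [_ [Hinv [eps [He Hint]]]]].
  assert (HN : forall n, N (homoclinic_orbit (eps / 2) n)).
  { intros n. apply Hint. rewrite dist2_0.
    pose proof (homoclinic_orbit_small (eps / 2) n ltac:(lra)). lra. }
  assert (Hi : Inv polar_map N (homoclinic_orbit (eps / 2) 0)).
  { split; auto. exists (homoclinic_orbit (eps / 2)). repeat split; auto.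
    intros n. apply homoclinic_orbit_step. lra. }
  apply Hinv in Hi. unfold homoclinic_orbit, pt in Hi. simpl in Hi.
  injection Hi as H1 H2. rewrite cos_0 in H1. lra.
Qed.

(** * A lift of the argument of [1 - h e^{ip}] *)

Definition modulus (h p : R) : R := sqrt ((1 - h * cos p) ^ 2 + (h * sin p) ^ 2).
Definition arg_near (h p : R) : R := atan (- h * sin p / (1 - h * cos p)).
Definition arg_far (h p : R) : R := p - PI + atan (sin p / (h - cos p)).
(* [arg_near] is an argument where [1 - h cos p > 0] and [arg_far] one where
   [h - cos p > 0].  The lift follows [p] by 2π-steps, so it is continuous
   except across [h <= 1, p ∈ 2πZ], where the [Int_part] jumps. *)
Definition arg_lift (h p : R) : R :=
  if Rlt_dec 1 h then arg_far h p else 2 * PI * IZR (Int_part (p / (2 * PI))) + arg_near h p.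

Lemma modulus_sq_alt h p :
  (1 - h * cos p) ^ 2 + (h * sin p) ^ 2 = (h - cos p) ^ 2 + (sin p) ^ 2.
Proof. pose proof (sin2_cos2 p) as E. unfold Rsqr in E. nra. Qed.

Lemma sqrt_1_plus_sq_ratio d u : 0 < d -> sqrt (1 + (u / d)²) = sqrt (d ^ 2 + u ^ 2) / d.
Proof.
  intros Hd. apply sqrt_lem_1.
  - pose proof (Rle_0_sqr (u / d)). lra.
  - apply Rmult_le_pos; [apply sqrt_pos| left; apply Rinv_0_lt_compat; lra].
  - unfold Rdiv. replace (sqrt (d ^ 2 + u ^ 2) * / d * (sqrt (d ^ 2 + u ^ 2) * / d))
      with ((sqrt (d ^ 2 + u ^ 2) * sqrt (d ^ 2 + u ^ 2)) * / (d * d)) by (field; lra).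
    rewrite sqrt_sqrt by nra. unfold Rsqr. field. lra.
Qed.

Lemma modulus_pos_near h p : 0 < 1 - h * cos p -> 0 < modulus h p.
Proof. intros. apply sqrt_lt_R0. nra. Qed.

Lemma modulus_pos_far h p : 0 < h - cos p -> 0 < modulus h p.
Proof. intros. unfold modulus. rewrite modulus_sq_alt. apply sqrt_lt_R0. nra. Qed.

Lemma arg_near_spec h p : 0 < 1 - h * cos p ->
  cos (arg_near h p) = (1 - h * cos p) / modulus h p /\
  sin (arg_near h p) = - h * sin p / modulus h p.
Proof.
  intros Hd. pose proof (modulus_pos_near h p Hd). unfold arg_near.
  rewrite cos_atan, sin_atan, sqrt_1_plus_sq_ratio by auto.
  unfold modulus. replace ((- h * sin p) ^ 2) with ((h * sin p) ^ 2) by ring.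
  fold (modulus h p). split; field; lra.
Qed.

Lemma arg_far_spec h p : 0 < h - cos p ->
  cos (arg_far h p) = (1 - h * cos p) / modulus h p /\
  sin (arg_far h p) = - h * sin p / modulus h p.
Proof.
  intros Hd. pose proof (modulus_pos_far h p Hd). unfold arg_far.
  set (a := atan (sin p / (h - cos p))).
  assert (Hs : sqrt (1 + (sin p / (h - cos p))²) = modulus h p / (h - cos p)).
  { rewrite sqrt_1_plus_sq_ratio by auto. unfold modulus. now rewrite modulus_sq_alt. }
  assert (Ca : cos a = (h - cos p) / modulus h p) by (unfold a; rewrite cos_atan, Hs; field; lra).
  assert (Sa : sin a = sin p / modulus h p) by (unfold a; rewrite sin_atan, Hs; field; lra).
  replace (p - PI + a) with ((p + a) - PI) by ring.
  rewrite cos_minus, sin_minus, cos_PI, sin_PI, cos_plus, sin_plus, Ca, Sa.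
  pose proof (sin2_cos2 p) as E. unfold Rsqr in E.
  split; field_simplify; try lra; f_equal; nra.
Qed.

Lemma arg_branch h p : 0 <= h -> ~ (h = 1 /\ cos p = 1) -> 0 < 1 - h * cos p \/ 1 < h.
Proof.
  intros Hh Hn. destruct (Rlt_dec 1 h); [now right|]. left. pose proof (COS_bound p).
  destruct (Req_dec h 1) as [->|]; [destruct (Req_dec (cos p) 1); [tauto| lra]|]. nra.
Qed.

Lemma modulus_pos h p : 0 <= h -> ~ (h = 1 /\ cos p = 1) -> 0 < modulus h p.
Proof.
  intros Hh Hn. pose proof (COS_bound p).
  destruct (arg_branch h p Hh Hn); [apply modulus_pos_near| apply modulus_pos_far]; lra.
Qed.

Lemma arg_lift_spec h p : 0 <= h -> ~ (h = 1 /\ cos p = 1) ->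
  cos (arg_lift h p) = (1 - h * cos p) / modulus h p /\
  sin (arg_lift h p) = - h * sin p / modulus h p.
Proof.
  intros Hh Hn. unfold arg_lift. destruct (Rlt_dec 1 h).
  - apply arg_far_spec. pose proof (COS_bound p). lra.
  - destruct (arg_branch h p Hh Hn) as [Hb|Hb]; [|lra].
    rewrite Rplus_comm, cos_period_Z, sin_period_Z. now apply arg_near_spec.
Qed.

Lemma Int_part_eq x k : IZR k <= x < IZR k + 1 -> Int_part x = k.
Proof. intros. symmetry. apply Int_part_spec. lra. Qed.

Lemma Int_part_bounds x : IZR (Int_part x) <= x < IZR (Int_part x) + 1.
Proof. pose proof (base_Int_part x). lra. Qed.

Lemma Int_part_int_plus k s : -1 < s < 1 ->
  Int_part (IZR k + s) = if Rlt_dec s 0 then (k - 1)%Z else k.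
Proof.
  intros Hs. apply Int_part_eq. destruct Rlt_dec; rewrite ?minus_IZR; simpl; lra.
Qed.

Lemma arg_lift_period_Z h p m : arg_lift h (p + 2 * PI * IZR m) = arg_lift h p + 2 * PI * IZR m.
Proof.
  unfold arg_lift. pose proof PI_RGT_0. destruct (Rlt_dec 1 h).
  - unfold arg_far. rewrite sin_period_Z, cos_period_Z. ring.
  - unfold arg_near. rewrite sin_period_Z, cos_period_Z.
    replace ((p + 2 * PI * IZR m) / (2 * PI)) with (p / (2 * PI) + IZR m) by (field; lra).
    rewrite (Int_part_eq _ (Int_part (p / (2 * PI)) + m)), plus_IZR; [ring|].
    rewrite plus_IZR. pose proof (Int_part_bounds (p / (2 * PI))). lra.
Qed.

(* Both branches are arguments of the same vector, and their difference is
   less than 2π in absolute value. *)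
Lemma arg_far_near h p k : 0 < 1 - h * cos p -> 0 < h - cos p ->
  IZR k < p / (2 * PI) < IZR k + 1 -> arg_far h p = 2 * PI * IZR k + arg_near h p.
Proof.
  intros H1 H2 Hk. pose proof PI_RGT_0.
  destruct (arg_near_spec h p H1) as [C1 S1], (arg_far_spec h p H2) as [C2 S2].
  destruct (cos_sin_eq_period (arg_far h p) (2 * PI * IZR k + arg_near h p)) as [z Hz].
  - rewrite Rplus_comm, cos_period_Z. congruence.
  - rewrite Rplus_comm, sin_period_Z. congruence.
  - assert (Hp : 0 < p - 2 * PI * IZR k < 2 * PI).
    { replace p with (2 * PI * (p / (2 * PI))) by (field; lra). nra. }
    assert (Hzb : Rabs (2 * PI * IZR z) < 2 * PI).
    { unfold arg_far, arg_near in Hz. pose proof (atan_bound (sin p / (h - cos p))).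
      pose proof (atan_bound (- h * sin p / (1 - h * cos p))). apply Rabs_def1; lra. }
    apply IZR_2PI_small in Hzb. rewrite Hzb in Hz. simpl in Hz. lra.
Qed.

Section ArgLiftContinuity.

Variables (h ps : R -> R) (t0 : R).
Hypotheses (Hh : continuity_pt h t0) (Hps : continuity_pt ps t0) (Hpos : forall t, 0 <= h t).

Lemma continuity_arg_far :
  h t0 - cos (ps t0) <> 0 -> continuity_pt (fun t => arg_far (h t) (ps t)) t0.
Proof. intros. unfold arg_far. cont; auto. apply cpt_div; cont; auto. Qed.

Lemma continuity_arg_near c :
  1 - h t0 * cos (ps t0) <> 0 -> continuity_pt (fun t => c + arg_near (h t) (ps t)) t0.
Proof. intros. unfold arg_near. cont; auto. apply cpt_div; cont; auto. Qed.

Lemma continuity_arg_lift_far :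
  1 < h t0 -> continuity_pt (fun t => arg_lift (h t) (ps t)) t0.
Proof.
  intros Hg. apply (continuity_pt_near_ext _ (fun t => arg_far (h t) (ps t))).
  - apply (near_mono t0 (fun t => 1 < h t)); [|now apply continuity_pt_near_gt].
    intros t Ht. unfold arg_lift. now destruct Rlt_dec.
  - apply continuity_arg_far. pose proof (COS_bound (ps t0)). lra.
Qed.

Lemma continuity_arg_lift_off_cut :
  (forall k, ps t0 <> 2 * PI * IZR k) -> continuity_pt (fun t => arg_lift (h t) (ps t)) t0.
Proof.
  intros Hc. pose proof PI_RGT_0.
  destruct (Rlt_dec 1 (h t0)) as [Hg|Hg]; [now apply continuity_arg_lift_far|].
  set (k := Int_part (ps t0 / (2 * PI))).
  assert (Hk : IZR k < ps t0 / (2 * PI) < IZR k + 1).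
  { destruct (Int_part_bounds (ps t0 / (2 * PI))) as [[Hb|Hb] Hb']; [split; assumption|].
    exfalso. apply (Hc k). unfold k. rewrite Hb. field. lra. }
  assert (Hcos : cos (ps t0) < 1).
  { pose proof (COS_bound (ps t0)). destruct (Req_dec (cos (ps t0)) 1) as [He|]; [|lra].
    destruct (cos_eq_1_period _ He) as [z Hz]. now destruct (Hc z). }
  assert (Hd0 : 0 < 1 - h t0 * cos (ps t0))
    by (pose proof (Hpos t0); pose proof (COS_bound (ps t0)); nra).
  assert (Hq : continuity_pt (fun t => ps t / (2 * PI)) t0)
    by (apply cpt_div; [auto| apply cpt_const| lra]).
  assert (Hn : continuity_pt (fun t => 1 - h t * cos (ps t)) t0) by (cont; auto).
  apply (continuity_pt_near_ext _ (fun t => 2 * PI * IZR k + arg_near (h t) (ps t))).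
  - pose proof (near_conj _ _ _ (continuity_pt_near_gt _ t0 (IZR k) Hq (proj1 Hk))
      (near_conj _ _ _ (continuity_pt_near_lt _ t0 (IZR k + 1) Hq (proj2 Hk))
        (continuity_pt_near_gt _ t0 0 Hn Hd0))) as Hnear.
    refine (near_mono t0 _ _ _ Hnear). intros t [Hl [Hu Hd]]. unfold arg_lift.
    destruct (Rlt_dec 1 (h t)).
    + apply arg_far_near; auto. pose proof (COS_bound (ps t)). lra.
    + rewrite (Int_part_eq _ k); [reflexivity| lra].
  - apply continuity_arg_near. lra.
Qed.

Lemma continuity_arg_lift_across_cut (k0 : Z) (jump : R -> R) :
  h t0 < 1 ->
  near t0 (fun t => 2 * PI * IZR (Int_part (ps t / (2 * PI))) + jump t = 2 * PI * IZR k0) ->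
  continuity_pt (fun t => arg_lift (h t) (ps t) + jump t) t0.
Proof.
  intros Hlt Hjump.
  apply (continuity_pt_near_ext _ (fun t => 2 * PI * IZR k0 + arg_near (h t) (ps t))).
  - refine (near_mono t0 _ _ _ (near_conj _ _ _ Hjump (continuity_pt_near_lt h t0 1 Hh Hlt))).
    intros t [Hj Hl]. unfold arg_lift. destruct (Rlt_dec 1 (h t)); lra.
  - apply continuity_arg_near. pose proof (Hpos t0). pose proof (COS_bound (ps t0)). nra.
Qed.

End ArgLiftContinuity.

(** * The fixed point index of the iterates *)

Lemma Phi_small v : Rabs v <= E0 -> Phi v = 2 * v.
Proof.
  intros Hv. replace v with (v + 2 * PI * IZR 0) at 1 by (simpl; ring).
  rewrite Phi_on_arc by (unfold E0, W0 in *; lra). simpl.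
  rewrite phi_arc_small by auto. ring.
Qed.

Lemma Phi_iter_small n v : Rabs v <= E0 / 2 ^ n -> Phi_iter n v = 2 ^ n * v.
Proof.
  revert v. induction n as [|n IH]; intros v Hv; [simpl; ring|].
  pose proof (pow_R1_Rle 2 n ltac:(lra)). change (2 ^ S n) with (2 * 2 ^ n) in *.
  assert (Hv1 : Rabs v <= E0).
  { apply (Rle_trans _ _ _ Hv). unfold E0.
    apply Rmult_le_reg_r with (2 * 2 ^ n); [lra|]. field_simplify; lra. }
  assert (Hv2 : Rabs (2 * v) <= E0 / 2 ^ n).
  { rewrite Rabs_mult, Rabs_right by lra.
    replace (E0 / 2 ^ n) with (2 * (E0 / (2 * 2 ^ n))) by (field; lra). lra. }
  unfold Phi_iter. rewrite Nat.iter_succ_r. fold (Phi_iter n).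
  rewrite Phi_small, IH by auto. ring.
Qed.

Lemma radial_prod_0 n : radial_prod n 0 = (1/2) ^ n.
Proof.
  apply radial_prod_const. intros j _.
  rewrite Phi_iter_small, Rmult_0_r; [apply radial_0|].
  rewrite Rabs_R0. unfold E0. apply Rmult_le_pos; [lra|].
  left. apply Rinv_0_lt_compat, pow_lt. lra.
Qed.

Definition loop_radial (n : nat) (t : R) : R := radial_prod n (2 * PI * t).
Definition loop_shift (n : nat) (t : R) : R := Phi_iter n (2 * PI * t) - 2 * PI * t.
(* A continuous argument of [x - f^n x] along the loop [x = r e^{2πit}]; the
   two step terms compensate the jumps of [arg_lift] at [t = 0] and [t = 1],
   where [loop_shift] crosses [2πZ] while [loop_radial < 1]. *)
Definition loop_arg (n : nat) (t : R) : R :=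
  2 * PI * t + arg_lift (loop_radial n t) (loop_shift n t)
  + (if Rlt_dec t 0 then 2 * PI else 0) - (if Rle_dec 1 t then 2 * PI else 0).

Lemma continuity_Phi_iter n x : continuity_pt (Phi_iter n) x.
Proof.
  revert x. induction n as [|n IH]; intros x; [apply cpt_id|].
  apply (cpt_comp (Phi_iter n) Phi); auto using continuity_Phi.
Qed.

Lemma continuity_radial_prod n x : continuity_pt (radial_prod n) x.
Proof.
  revert x. induction n as [|n IH]; intros x; [apply cpt_const|].
  apply (cpt_mult (radial_prod n) (fun y => radial (Phi_iter n y))); auto.
  apply (cpt_comp (Phi_iter n) radial); auto using continuity_Phi_iter, continuity_radial.
Qed.

Lemma continuity_loop_radial n t : continuity_pt (loop_radial n) t.
Proof.
  apply (cpt_comp (fun y => 2 * PI * y) (radial_prod n)); [cont| apply continuity_radial_prod].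
Qed.

Lemma continuity_loop_shift n t : continuity_pt (loop_shift n) t.
Proof.
  apply cpt_minus; [|cont].
  apply (cpt_comp (fun y => 2 * PI * y) (Phi_iter n)); [cont| apply continuity_Phi_iter].
Qed.

Lemma loop_radial_nonneg n t : 0 <= loop_radial n t.
Proof. left. apply radial_prod_pos. Qed.

Lemma loop_radial_int n m : loop_radial n (IZR m) = (1/2) ^ n.
Proof.
  unfold loop_radial. replace (2 * PI * IZR m) with (0 + 2 * PI * IZR m) by ring.
  now rewrite radial_prod_period_Z, radial_prod_0.
Qed.

Lemma loop_off_cut n t : (1 <= n)%nat ->
  ~ (loop_radial n t = 1 /\ cos (loop_shift n t) = 1).
Proof.
  intros Hn [Hr Hc]. destruct (cos_eq_1_period _ Hc) as [k Hk].
  apply (radial_prod_periodic_ne_1 n (2 * PI * t) k Hn); auto.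
  unfold loop_shift in Hk. lra.
Qed.

Lemma IZR_two_pow n : IZR (2 ^ Z.of_nat n) = 2 ^ n.
Proof. now rewrite <- pow_IZR. Qed.

Lemma loop_shift_near_int n m t : Rabs (t - IZR m) <= E0 / (2 * PI * 2 ^ n) ->
  loop_shift n t = 2 * PI * ((2 ^ n - 1) * (t - IZR m) + IZR ((2 ^ Z.of_nat n - 1) * m)).
Proof.
  intros Ht. pose proof PI_RGT_0. pose proof (pow_lt 2 n ltac:(lra)).
  unfold loop_shift. replace (2 * PI * t) with (2 * PI * (t - IZR m) + 2 * PI * IZR m) at 1 by ring.
  rewrite Phi_iter_period_Z, Phi_iter_small.
  { rewrite !mult_IZR, minus_IZR, IZR_two_pow. simpl. ring. }
  rewrite Rabs_mult, Rabs_right by lra.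
  replace (E0 / 2 ^ n) with (2 * PI * (E0 / (2 * PI * 2 ^ n))) by (field; lra).
  apply Rmult_le_compat_l; lra.
Qed.

Lemma loop_Int_part_near_int n m : (1 <= n)%nat ->
  near (IZR m) (fun t => 2 * PI * IZR (Int_part (loop_shift n t / (2 * PI)))
                         + (if Rlt_dec t (IZR m) then 2 * PI else 0)
                         = 2 * PI * IZR ((2 ^ Z.of_nat n - 1) * m)).
Proof.
  intros Hn. pose proof PI_gt_2. pose proof (two_pow_ge_2 n Hn).
  set (d := E0 / (2 * PI * 2 ^ n)).
  assert (Hd : 0 < d) by (unfold d, E0; apply Rdiv_lt_0_compat; nra).
  assert (Hd1 : 2 ^ n * d < 1)
    by (unfold d, E0; apply Rmult_lt_reg_r with (2 * PI); field_simplify; nra).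
  exists d. split; auto. intros t Ht.
  rewrite (loop_shift_near_int n m t) by (unfold d in Ht; lra).
  replace (2 * PI * ((2 ^ n - 1) * (t - IZR m) + IZR ((2 ^ Z.of_nat n - 1) * m)) / (2 * PI))
    with (IZR ((2 ^ Z.of_nat n - 1) * m) + (2 ^ n - 1) * (t - IZR m)) by (field; lra).
  assert (Hs : Rabs ((2 ^ n - 1) * (t - IZR m)) < 1).
  { rewrite Rabs_mult, (Rabs_right (2 ^ n - 1)) by lra. pose proof (Rabs_pos (t - IZR m)). nra. }
  apply Rabs_def2 in Hs. rewrite Int_part_int_plus by lra.
  do 2 destruct Rlt_dec; rewrite ?minus_IZR; simpl; nra.
Qed.

Lemma continuity_loop_arg_int n m : (1 <= n)%nat -> (m = 0 \/ m = 1)%Z ->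
  continuity_pt (loop_arg n) (IZR m).
Proof.
  intros Hn Hm. pose proof PI_RGT_0.
  set (jump := fun t => if Rlt_dec t (IZR m) then 2 * PI else 0).
  assert (Hc : continuity_pt
    (fun t => arg_lift (loop_radial n t) (loop_shift n t) + jump t) (IZR m)).
  { apply (continuity_arg_lift_across_cut _ _ _ (continuity_loop_radial n _)
      (continuity_loop_shift n _) (loop_radial_nonneg n) ((2 ^ Z.of_nat n - 1) * m)).
    - rewrite loop_radial_int. pose proof (half_pow_le_half n Hn). lra.
    - exact (loop_Int_part_near_int n m Hn). }
  apply (continuity_pt_near_ext _
    (fun t => 2 * PI * t + (arg_lift (loop_radial n t) (loop_shift n t) + jump t)
              - 2 * PI * IZR m)).
  - exists (1/2). split; [lra|]. intros t Ht. apply Rabs_def2 in Ht. unfold loop_arg, jump.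
    destruct Hm as [-> | ->]; simpl in *; repeat destruct Rlt_dec; repeat destruct Rle_dec; lra.
  - apply cpt_minus; [apply cpt_plus; [cont| exact Hc]| apply cpt_const].
Qed.

Lemma continuity_loop_arg_interior n t : (1 <= n)%nat -> 0 < t < 1 ->
  continuity_pt (loop_arg n) t.
Proof.
  intros Hn Ht.
  pose proof (continuity_loop_radial n t) as Hr. pose proof (continuity_loop_shift n t) as Hs.
  pose proof (loop_radial_nonneg n) as Hpos.
  assert (Hc : continuity_pt (fun y => arg_lift (loop_radial n y) (loop_shift n y)) t).
  { destruct (Rlt_dec 1 (loop_radial n t)) as [Hgt|Hle].
    - now apply continuity_arg_lift_far.
    - apply continuity_arg_lift_off_cut; auto.
      intros k Hk. unfold loop_shift, loop_radial in *.
      destruct (radial_prod_periodic n (2 * PI * t) k Hn ltac:(lra)) as [Hd|[[m Hm] _]].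
      + pose proof (two_pow_ge_2 n Hn). lra.
      + assert (Htm : t = IZR m)
          by (apply Rmult_eq_reg_l with (2 * PI); pose proof PI_RGT_0; lra).
        rewrite Htm in Ht. destruct Ht as [Hm0 Hm1]. apply lt_IZR in Hm0, Hm1. lia. }
  apply (continuity_pt_near_ext _
    (fun y => 2 * PI * y + arg_lift (loop_radial n y) (loop_shift n y))).
  - exists (Rmin t (1 - t)). split; [apply Rmin_glb_lt; lra|]. intros y Hy.
    pose proof (Rmin_l t (1 - t)). pose proof (Rmin_r t (1 - t)). apply Rabs_def2 in Hy.
    unfold loop_arg. destruct Rlt_dec; [lra|]. destruct Rle_dec; [lra|]. ring.
  - apply cpt_plus; [cont| exact Hc].
Qed.

Lemma continuity_loop_arg n t : (1 <= n)%nat -> 0 <= t <= 1 -> continuity_pt (loop_arg n) t.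
Proof.
  intros Hn Ht.
  destruct (Rtotal_order t 0) as [|[->|Ht0]]; [lra| apply (continuity_loop_arg_int n 0); auto|].
  destruct (Rtotal_order t 1) as [Ht1|[->|]]; [| apply (continuity_loop_arg_int n 1); auto| lra].
  apply continuity_loop_arg_interior; [exact Hn| lra].
Qed.

Lemma loop_arg_increment n : loop_arg n 1 - loop_arg n 0 = 2 * PI * IZR (2 ^ Z.of_nat n - 1).
Proof.
  assert (Hr : loop_radial n 1 = loop_radial n 0)
    by exact (eq_trans (loop_radial_int n 1) (eq_sym (loop_radial_int n 0))).
  assert (Hs : loop_shift n 1 = loop_shift n 0 + 2 * PI * IZR (2 ^ Z.of_nat n - 1)).
  { unfold loop_shift. rewrite Rmult_0_r.
    replace (2 * PI * 1) with (0 + 2 * PI * IZR 1) at 1 by (simpl; ring).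
    rewrite Phi_iter_period_Z, Z.mul_1_r, minus_IZR, IZR_two_pow. simpl IZR. ring. }
  unfold loop_arg. rewrite Hr, Hs, arg_lift_period_Z.
  destruct (Rlt_dec 1 0), (Rle_dec 1 1), (Rlt_dec 0 0), (Rle_dec 1 0); lra.
Qed.

(* [x - f^n x = r e^{2πit} (1 - h e^{ip})] with [h = loop_radial n t] and
   [p = loop_shift n t]. *)
Lemma displacement_polar n r t : (1 <= n)%nat -> 0 < r -> 0 <= t <= 1 ->
  let x := add2 (0, 0) (r * cos (2 * PI * t), r * sin (2 * PI * t)) in
  let rho := r * modulus (loop_radial n t) (loop_shift n t) in
  0 < rho /\ sub2 x (iter2 n polar_map x) = (rho * cos (loop_arg n t), rho * sin (loop_arg n t)).
Proof.
  intros Hn Hr Ht x rho. pose proof PI_RGT_0.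
  pose proof (loop_radial_nonneg n t) as Hh. pose proof (loop_off_cut n t Hn) as Hcut.
  split; [apply Rmult_lt_0_compat; auto using modulus_pos|].
  destruct (arg_lift_spec _ _ Hh Hcut) as [Ca Sa].
  pose proof (modulus_pos _ _ Hh Hcut) as Hm.
  assert (HL : exists m, loop_arg n t =
    2 * PI * t + arg_lift (loop_radial n t) (loop_shift n t) + 2 * PI * IZR m).
  { unfold loop_arg. destruct Rlt_dec; [lra|]. destruct Rle_dec.
    - exists (-1)%Z. simpl. ring.
    - exists 0%Z. simpl. ring. }
  destruct HL as [m ->]. rewrite cos_period_Z, sin_period_Z.
  unfold x, rho, add2, sub2. cbn [fst snd].
  rewrite !Rplus_0_l, polar_map_iter by lra. cbn [fst snd].
  replace (Phi_iter n (2 * PI * t)) with (2 * PI * t + loop_shift n t) by (unfold loop_shift; ring).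
  fold (loop_radial n t).
  rewrite cos_plus, sin_plus, (cos_plus (2 * PI * t)), (sin_plus (2 * PI * t)), Ca, Sa.
  f_equal; field; lra.
Qed.

Lemma fixed_point_index_iter n : (1 <= n)%nat ->
  fixed_point_index (iter2 n polar_map) (0, 0) (2 ^ Z.of_nat n - 1)%Z.
Proof.
  intros Hn. split.
  - replace (0, 0) with (0 * cos 0, 0 * sin 0) by (f_equal; ring).
    rewrite polar_map_iter by lra. f_equal; ring.
  - exists 1. split; [lra|]. split.
    + intros x _ Hx. now apply (polar_map_iter_fixed n).
    + intros r Hr _.
      apply (winding_number_of_lift _ (loop_arg n)
               (fun t => r * modulus (loop_radial n t) (loop_shift n t))).
      * intros t Ht. now apply continuity_loop_arg.
      * intros t Ht. exact (displacement_polar n r t Hn Hr Ht).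
      * apply loop_arg_increment.
Qed.

Theorem mainTheorem9 :
  exists (f : R2 -> R2) (p : R2),
    continuous2 f /\ f p = p /\
    (exists eps, 0 < eps /\
       forall x, dist2 x p < eps -> periodic_point f x -> x = p) /\
    ~ isolated_invariant_singleton f p /\
    (forall n : nat, (1 <= n)%nat ->
       fixed_point_index (iter2 n f) p (2 ^ Z.of_nat n - 1)%Z).
Proof.
  exists polar_map, (0, 0).
  split; [exact continuous_polar_map|].
  split; [exact polar_map_0|].
  split; [exists 1; split; [lra|]; intros x _ [n [Hn Hx]]; exact (polar_map_iter_fixed n x Hn Hx)|].
  split; [exact polar_map_not_isolated|].
  exact fixed_point_index_iter.
Qed.
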